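(* For $R>0$, let $s(R)=\tanh\frac R2$. Then the geodesic ball of radius $R$ about $\mathbf 0$ with respect to $g_{\tilde B}$ equals the Euclidean ball of radius $s(R)$ about $\mathbf 0$: $B^{g_{\tilde B}}_R(\mathbf 0)=B^{\mathbb R}_{s(R)}(\mathbf 0)$.
   Context: On the open unit ball $\mathbb B^{2n+2}\subset\mathbb R^{2n+2}\cong\mathbb C^{n+1}$ (coordinates $z_j=x_j+iy_j$, $r=|z|$), let $\theta=r^{-2}\sum_j(x_jdy_j-y_jdx_j)$ and let $g_{\tilde B}=\frac{4}{(1-r^2)^2}g_{\mathbb R}+\frac{16r^4}{(1-r^2)^4}\theta^2$ be the modified Bergman metric, where $g_{\mathbb R}$ is the Euclidean metric. *)

From Stdlib Require Import Reals Lra.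
From Coquelicot Require Import Coquelicot.
Open Scope R_scope.

(* A point of R^{2n+2} = C^{n+1} is encoded as p : nat -> R with
   x_j = p (2j), y_j = p (2j+1), j = 0..n; coordinates >= 2n+2 are ignored. *)

Definition sqnorm (n : nat) (p : nat -> R) : R :=
  sum_f_R0 (fun k => p k ^ 2) (2 * n + 1).

(* omega_p(v) = sum_j (x_j dy_j - y_j dx_j)(v) = r^2 theta_p(v) *)
Definition omega (n : nat) (p v : nat -> R) : R :=
  sum_f_R0 (fun j => p (2 * j)%nat * v (2 * j + 1)%nat
                     - p (2 * j + 1)%nat * v (2 * j)%nat) n.

(* modified Bergman metric g_B~ at p applied to (v,v):
   4/(1-r^2)^2 |v|^2 + 16 r^4/(1-r^2)^4 theta(v)^2, with r^4 theta(v)^2 = omega(v)^2 *)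
Definition gB (n : nat) (p v : nat -> R) : R :=
  4 / (1 - sqnorm n p) ^ 2 * sqnorm n v
  + 16 / (1 - sqnorm n p) ^ 4 * (omega n p v) ^ 2.

Definition admissible_curve (n : nat) (c : nat -> R -> R) (p : nat -> R) : Prop :=
  (forall k, (k < 2 * n + 2)%nat ->
     (forall t, 0 <= t <= 1 -> ex_derive (c k) t /\ continuous (Derive (c k)) t)
     /\ c k 0 = 0 /\ c k 1 = p k)
  /\ (forall t, 0 <= t <= 1 -> sqnorm n (fun k => c k t) < 1).

Definition gB_length (n : nat) (c : nat -> R -> R) : R :=
  RInt (fun t => sqrt (gB n (fun k => c k t) (fun k => Derive (c k) t))) 0 1.

(* p lies in the geodesic ball B^{g_B~}_Rad(0): p in B^{2n+2} and the
   Riemannian distance d(0,p) = inf of lengths of admissible curves is < Rad,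
   i.e. some admissible curve from 0 to p has length < Rad. *)
Definition geodesic_ball (n : nat) (Rad : R) (p : nat -> R) : Prop :=
  sqnorm n p < 1 /\
  exists c, admissible_curve n c p /\ gB_length n c < Rad.

Definition euclid_ball (n : nat) (s : R) (p : nat -> R) : Prop :=
  sqrt (sqnorm n p) < s.

From Stdlib Require Import Reals Lra Lia Psatz FunctionalExtensionality.
From Coquelicot Require Import Coquelicot.
Open Scope R_scope.

(* Dropping the [theta^2] term, [g] dominates the Poincare metric
   [4 |dx|^2 / (1 - |x|^2)^2], and since [|c'| >= |c|'] every curve from [0]
   to [p] has length at least [ln ((1 + |p|) / (1 - |p|)) = 2 artanh |p|].
   Along the radial segment [t p] the form [theta] vanishes and the bound is
   attained, so [d(0, p) = 2 artanh |p|], which is [< R] iff [|p| < tanh (R/2)]. *)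

Lemma sum_f_R0_continuous (f : nat -> R -> R) (N : nat) (t : R) :
  (forall k, (k <= N)%nat -> continuous (f k) t) ->
  continuous (fun t => sum_f_R0 (fun k => f k t) N) t.
Proof.
  induction N as [|N IH]; intros Hf; cbn [sum_f_R0].
  - now apply Hf.
  - apply (continuous_plus (fun t => sum_f_R0 (fun k => f k t) N)).
    + apply IH; intros k Hk; apply Hf; lia.
    + apply Hf; lia.
Qed.

Lemma sum_f_R0_is_derive (f : nat -> R -> R) (df : nat -> R) (N : nat) (t : R) :
  (forall k, (k <= N)%nat -> is_derive (f k) t (df k)) ->
  is_derive (fun t => sum_f_R0 (fun k => f k t) N) t (sum_f_R0 df N).
Proof.
  intros Hf. rewrite <- sum_n_Reals.
  apply (is_derive_ext (fun t => sum_n (fun k => f k t) N)).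
  - intros s; apply sum_n_Reals.
  - exact (@is_derive_sum_n R_AbsRing R_NormedModule f N t df Hf).
Qed.

Lemma sum_f_R0_sq_ge0 (a : nat -> R) (N : nat) : 0 <= sum_f_R0 (fun k => a k ^ 2) N.
Proof.
  induction N as [|N IH]; cbn [sum_f_R0].
  - apply pow2_ge_0.
  - pose proof (pow2_ge_0 (a (S N))); lra.
Qed.

Lemma sum_f_R0_Cauchy_Schwarz (a b : nat -> R) (N : nat) :
  sum_f_R0 (fun k => a k * b k) N ^ 2
  <= sum_f_R0 (fun k => a k ^ 2) N * sum_f_R0 (fun k => b k ^ 2) N.
Proof.
  induction N as [|N IH]; cbn [sum_f_R0]; [nra |].
  set (A := sum_f_R0 (fun k => a k ^ 2) N) in *.
  set (B := sum_f_R0 (fun k => b k ^ 2) N) in *.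
  set (C := sum_f_R0 (fun k => a k * b k) N) in *.
  set (x := a (S N)); set (y := b (S N)).
  assert (HA : 0 <= A) by apply sum_f_R0_sq_ge0.
  assert (HB : 0 <= B) by apply sum_f_R0_sq_ge0.
  enough (2 * C * x * y <= A * y ^ 2 + B * x ^ 2) by nra.
  destruct HA as [HA | <-].
  - apply (Rmult_le_reg_l A); [exact HA |].
    assert (A * (A * y ^ 2 + B * x ^ 2) - A * (2 * C * x * y)
            = (A * y - C * x) ^ 2 + x ^ 2 * (A * B - C ^ 2)) by ring.
    pose proof (pow2_ge_0 (A * y - C * x)).
    pose proof (Rmult_le_pos (x ^ 2) (A * B - C ^ 2) (pow2_ge_0 x) ltac:(lra)).
    lra.
  - assert (C = 0) by nra. subst C. nra.
Qed.

Definition dot (n : nat) (x v : nat -> R) : R :=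
  sum_f_R0 (fun k => x k * v k) (2 * n + 1).

Lemma sqnorm_ge0 (n : nat) (x : nat -> R) : 0 <= sqnorm n x.
Proof. apply sum_f_R0_sq_ge0. Qed.

Lemma dot_le_sqrt_sqnorm (n : nat) (x v : nat -> R) :
  dot n x v <= sqrt (sqnorm n x) * sqrt (sqnorm n v).
Proof.
  rewrite <- sqrt_mult by apply sqnorm_ge0.
  apply (Rle_trans _ (Rabs (dot n x v))); [apply Rle_abs |].
  rewrite <- sqrt_Rsqr_abs, Rsqr_pow2. apply sqrt_le_1_alt.
  apply sum_f_R0_Cauchy_Schwarz.
Qed.

Lemma sqrt_lt_one (x : R) : 0 <= x < 1 -> sqrt x < 1.
Proof. intros Hx. rewrite <- sqrt_1. now apply sqrt_lt_1_alt. Qed.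

Lemma tanh_half (x : R) : tanh (x / 2) = (exp x - 1) / (exp x + 1).
Proof.
  unfold tanh, sinh, cosh.
  assert (E : exp x = exp (x / 2) * exp (x / 2)) by (rewrite <- exp_plus; f_equal; field).
  rewrite E, exp_Ropp. pose proof (exp_pos (x / 2)). field. split; nra.
Qed.

Lemma tanh_half_bounds (x : R) : -1 < tanh (x / 2) < 1.
Proof.
  rewrite tanh_half. pose proof (exp_pos x).
  split; [apply Rlt_div_r | apply Rlt_div_l]; lra.
Qed.

Lemma tanh_half_pos (x : R) : 0 < x -> 0 < tanh (x / 2).
Proof.
  intros Hx. rewrite tanh_half. pose proof (exp_pos x).
  assert (1 < exp x) by (rewrite <- exp_0; now apply exp_increasing).
  apply Rdiv_lt_0_compat; lra.
Qed.

(* [poincare_dist s = 2 artanh s] is the distance from [0] to a point of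
   Euclidean norm [s] for the Poincare metric [4 |dx|^2 / (1 - |x|^2)^2]. *)
Definition poincare_dist (s : R) : R := ln ((1 + s) / (1 - s)).

Lemma poincare_dist_tanh_half (x : R) : poincare_dist (tanh (x / 2)) = x.
Proof.
  unfold poincare_dist. rewrite tanh_half. pose proof (exp_pos x).
  replace ((1 + (exp x - 1) / (exp x + 1)) / (1 - (exp x - 1) / (exp x + 1)))
    with (exp x) by (field; lra).
  apply ln_exp.
Qed.

Lemma poincare_dist_lt (s t : R) : -1 < s < t -> t < 1 -> poincare_dist s < poincare_dist t.
Proof.
  intros Hs Ht. unfold poincare_dist. apply ln_increasing; [apply Rdiv_lt_0_compat; lra |].
  assert (E : (1 + t) / (1 - t) - (1 + s) / (1 - s) = 2 * (t - s) / ((1 - t) * (1 - s)))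
    by (field; lra).
  assert (0 < 2 * (t - s) / ((1 - t) * (1 - s))) by (apply Rdiv_lt_0_compat; nra).
  lra.
Qed.

Lemma poincare_dist_le (s t : R) : -1 < s <= t -> t < 1 -> poincare_dist s <= poincare_dist t.
Proof.
  intros [Hs [Hst | <-]] Ht; [apply Rlt_le, poincare_dist_lt | apply Rle_refl]; lra.
Qed.

Lemma poincare_dist_lt_iff (s r : R) : -1 < s < 1 -> poincare_dist s < r <-> s < tanh (r / 2).
Proof.
  intros Hs. pose proof (tanh_half_bounds r) as Ht.
  rewrite <- (poincare_dist_tanh_half r) at 1.
  split; intros H.
  - destruct (Rlt_or_le s (tanh (r / 2))) as [Hlt | Hle]; [exact Hlt |].
    pose proof (poincare_dist_le (tanh (r / 2)) s ltac:(lra) ltac:(lra)). lra.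
  - apply poincare_dist_lt; lra.
Qed.

Lemma poincare_dist_sqrt_is_derive (x : R) : 0 < x < 1 ->
  is_derive (fun x => poincare_dist (sqrt x)) x (/ (sqrt x * (1 - x))).
Proof.
  intros Hx.
  assert (Hs : 0 < sqrt x) by (apply sqrt_lt_R0; lra).
  assert (Hs1 : sqrt x < 1) by (apply sqrt_lt_one; lra).
  assert (Hsq : sqrt x * sqrt x = x) by (apply sqrt_sqrt; lra).
  unfold poincare_dist. auto_derive.
  - repeat split; try lra. apply Rdiv_lt_0_compat; lra.
  - set (s := sqrt x) in *. rewrite <- Hsq. field. repeat split; nra.
Qed.

Lemma increment_le_RInt (f df g : R -> R) (a b : R) : a <= b ->
  (forall t, a <= t <= b -> is_derive f t (df t)) ->
  (forall t, a <= t <= b -> continuous df t) ->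
  (forall t, a <= t <= b -> continuous g t) ->
  (forall t, a < t < b -> df t <= g t) ->
  f b - f a <= RInt g a b.
Proof.
  intros Hab Hf Hdf Hg Hle.
  assert (HI : is_RInt df a b (f b - f a)).
  { apply (is_RInt_derive f df); rewrite Rmin_left, Rmax_right by exact Hab; assumption. }
  rewrite <- (is_RInt_unique _ _ _ _ HI).
  apply RInt_le; [exact Hab | now exists (f b - f a) | | exact Hle].
  apply (@ex_RInt_continuous R_CompleteNormedModule).
  rewrite Rmin_left, Rmax_right by exact Hab. exact Hg.
Qed.

Lemma sqnorm_continuous (n : nat) (x : nat -> R -> R) (t : R) :
  (forall k, (k <= 2 * n + 1)%nat -> continuous (x k) t) ->
  continuous (fun t => sqnorm n (fun k => x k t)) t.
Proof.
  intros Hx. apply (sum_f_R0_continuous (fun k t => x k t ^ 2)).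
  intros k Hk. apply (continuous_mult (x k)); [now apply Hx |].
  apply (continuous_mult (x k)); [now apply Hx | apply continuous_const].
Qed.

Lemma dot_continuous (n : nat) (x v : nat -> R -> R) (t : R) :
  (forall k, (k <= 2 * n + 1)%nat -> continuous (x k) t /\ continuous (v k) t) ->
  continuous (fun t => dot n (fun k => x k t) (fun k => v k t)) t.
Proof.
  intros Hxv. apply (sum_f_R0_continuous (fun k t => x k t * v k t)).
  intros k Hk. apply (continuous_mult (x k) (v k)); apply Hxv; exact Hk.
Qed.

Lemma omega_continuous (n : nat) (x v : nat -> R -> R) (t : R) :
  (forall k, (k <= 2 * n + 1)%nat -> continuous (x k) t /\ continuous (v k) t) ->
  continuous (fun t => omega n (fun k => x k t) (fun k => v k t)) t.
Proof.
  intros Hxv.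
  apply (sum_f_R0_continuous
           (fun j t => x (2 * j)%nat t * v (2 * j + 1)%nat t
                       - x (2 * j + 1)%nat t * v (2 * j)%nat t)).
  intros j Hj.
  apply (continuous_minus (fun t => x (2 * j)%nat t * v (2 * j + 1)%nat t));
    [apply (continuous_mult (x (2 * j)%nat)) | apply (continuous_mult (x (2 * j + 1)%nat))];
    apply Hxv; lia.
Qed.

Lemma pow_continuous (f : R -> R) (m : nat) (t : R) :
  continuous f t -> continuous (fun t => f t ^ m) t.
Proof.
  intros Hf. induction m as [|m IH]; [apply continuous_const |].
  now apply (continuous_mult (K := R_AbsRing)).
Qed.

Lemma gB_continuous (n : nat) (x v : nat -> R -> R) (t : R) :
  sqnorm n (fun k => x k t) < 1 ->
  (forall k, (k <= 2 * n + 1)%nat -> continuous (x k) t /\ continuous (v k) t) ->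
  continuous (fun t => gB n (fun k => x k t) (fun k => v k t)) t.
Proof.
  intros Hx Hxv.
  assert (Hinv : forall m, continuous (fun t => / (1 - sqnorm n (fun k => x k t)) ^ m) t).
  { intros m. apply continuous_Rinv_comp; [| apply pow_nonzero; lra].
    apply pow_continuous, (continuous_minus (V := R_NormedModule));
      [apply continuous_const | apply sqnorm_continuous; intros k Hk; now apply Hxv]. }
  unfold gB, Rdiv.
  apply (continuous_plus (V := R_NormedModule));
    apply (continuous_mult (K := R_AbsRing));
    try (apply (continuous_mult (K := R_AbsRing)); [apply continuous_const | apply Hinv]).
  - apply sqnorm_continuous. intros k Hk; now apply Hxv.
  - now apply pow_continuous, omega_continuous.
Qed.

Lemma sqnorm_is_derive (n : nat) (x : nat -> R -> R) (dx : nat -> R) (t : R) :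
  (forall k, (k <= 2 * n + 1)%nat -> is_derive (x k) t (dx k)) ->
  is_derive (fun t => sqnorm n (fun k => x k t)) t (2 * dot n (fun k => x k t) dx).
Proof.
  intros Hx. unfold dot. rewrite scal_sum.
  apply (sum_f_R0_is_derive (fun k t => x k t ^ 2)). intros k Hk.
  replace (x k t * dx k * 2) with (INR 2 * dx k * x k t ^ Nat.pred 2) by (simpl; ring).
  apply is_derive_pow. now apply Hx.
Qed.

Lemma sqrt_gB_ge (n : nat) (x v : nat -> R) : sqnorm n x < 1 ->
  2 * sqrt (sqnorm n v) / (1 - sqnorm n x) <= sqrt (gB n x v).
Proof.
  intros Hx. pose proof (sqnorm_ge0 n v) as Hv.
  rewrite <- (sqrt_pow2 (2 * sqrt (sqnorm n v) / (1 - sqnorm n x))).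
  2:{ apply Rdiv_le_0_compat; [pose proof (sqrt_pos (sqnorm n v)) |]; lra. }
  apply sqrt_le_1_alt. unfold gB.
  assert (E : (2 * sqrt (sqnorm n v) / (1 - sqnorm n x)) ^ 2
              = 4 / (1 - sqnorm n x) ^ 2 * (sqrt (sqnorm n v) * sqrt (sqnorm n v)))
    by (field; lra).
  rewrite sqrt_sqrt in E by exact Hv. rewrite E.
  enough (0 <= 16 / (1 - sqnorm n x) ^ 4 * omega n x v ^ 2) by lra.
  apply Rmult_le_pos; [| apply pow2_ge_0].
  apply Rdiv_le_0_compat; [lra | apply pow_lt; lra].
Qed.

Lemma smoothed_rate_le_speed (n : nat) (a : R) (x v : nat -> R) :
  0 < a < 1 -> sqnorm n x < 1 ->
  let q := a ^ 2 + (1 - a ^ 2) * sqnorm n x in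
  (1 - a ^ 2) * (2 * dot n x v) * / (sqrt q * (1 - q)) <= sqrt (gB n x v).
Proof.
  intros Ha Hx q. pose proof (sqnorm_ge0 n x) as Hx0.
  assert (Ha2 : 0 < a ^ 2 < 1) by (split; nra).
  assert (HUq : sqnorm n x <= q) by (unfold q; nra).
  assert (Hq : 0 < q) by (unfold q; nra).
  assert (Hs : 0 < sqrt q) by (apply sqrt_lt_R0; exact Hq).
  assert (Hdot : dot n x v <= sqrt q * sqrt (sqnorm n v)).
  { apply (Rle_trans _ _ _ (dot_le_sqrt_sqnorm n x v)).
    apply Rmult_le_compat_r; [apply sqrt_pos | now apply sqrt_le_1_alt]. }
  apply (Rle_trans _ (2 * sqrt (sqnorm n v) / (1 - sqnorm n x))); [| now apply sqrt_gB_ge].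
  assert (Hq1 : 1 - q = (1 - a ^ 2) * (1 - sqnorm n x)) by (unfold q; ring).
  replace ((1 - a ^ 2) * (2 * dot n x v) * / (sqrt q * (1 - q)))
    with (2 * dot n x v / (sqrt q * (1 - sqnorm n x))) by (rewrite Hq1; field; lra).
  apply Rle_div_l; [apply Rmult_lt_0_compat; lra |].
  replace (2 * sqrt (sqnorm n v) / (1 - sqnorm n x) * (sqrt q * (1 - sqnorm n x)))
    with (2 * (sqrt q * sqrt (sqnorm n v))) by (field; lra).
  lra.
Qed.

Section AdmissibleCurve.

Variables (n : nat) (c : nat -> R -> R) (p : nat -> R).
Hypothesis Hc : admissible_curve n c p.

Lemma curve_is_derive (k : nat) (t : R) : (k <= 2 * n + 1)%nat -> 0 <= t <= 1 ->
  is_derive (c k) t (Derive (c k) t).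
Proof.
  intros Hk Ht. apply Derive_correct. apply (proj1 (proj1 Hc k ltac:(lia)) t Ht).
Qed.

Lemma curve_continuous (k : nat) (t : R) : (k <= 2 * n + 1)%nat -> 0 <= t <= 1 ->
  continuous (c k) t /\ continuous (Derive (c k)) t.
Proof.
  intros Hk Ht. destruct (proj1 (proj1 Hc k ltac:(lia)) t Ht) as [Hd Hcd].
  split; [exact (ex_derive_continuous (c k) t Hd) | exact Hcd].
Qed.

Lemma curve_sqnorm_is_derive (t : R) : 0 <= t <= 1 ->
  is_derive (fun t => sqnorm n (fun k => c k t)) t
    (2 * dot n (fun k => c k t) (fun k => Derive (c k) t)).
Proof. intros Ht. apply sqnorm_is_derive. intros k Hk. now apply curve_is_derive. Qed.

Lemma curve_speed_continuous (t : R) : 0 <= t <= 1 ->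
  continuous (fun t => sqrt (gB n (fun k => c k t) (fun k => Derive (c k) t))) t.
Proof.
  intros Ht. apply continuous_sqrt_comp.
  apply (gB_continuous n c (fun k => Derive (c k))); [now apply (proj2 Hc) |].
  intros k Hk. now apply curve_continuous.
Qed.

Lemma curve_sqnorm_0 : sqnorm n (fun k => c k 0) = 0.
Proof.
  unfold sqnorm. transitivity (sum_f_R0 (fun _ => 0) (2 * n + 1));
    [apply sum_eq | rewrite sum_cte; ring].
  intros k Hk. rewrite (proj1 (proj2 (proj1 Hc k ltac:(lia)))). ring.
Qed.

Lemma curve_sqnorm_1 : sqnorm n (fun k => c k 1) = sqnorm n p.
Proof.
  apply sum_eq. intros k Hk. now rewrite (proj2 (proj2 (proj1 Hc k ltac:(lia)))).
Qed.

Lemma sqnorm_endpoint_lt_1 : sqnorm n p < 1.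
Proof. rewrite <- curve_sqnorm_1. apply (proj2 Hc). lra. Qed.

(* [|x|] need not be differentiable along the curve where it vanishes, but
   [sqrt (a^2 + (1 - a^2) |x|^2)] is, and it tends to [|x|] as [a -> 0]. *)
Lemma gB_length_ge_smoothed (a : R) : 0 < a < 1 ->
  poincare_dist (sqrt (a ^ 2 + (1 - a ^ 2) * sqnorm n p)) - poincare_dist a
  <= gB_length n c.
Proof.
  intros Ha. assert (Ha2 : 0 < a ^ 2 < 1) by (split; nra).
  set (U t := sqnorm n (fun k => c k t)).
  set (q t := a ^ 2 + (1 - a ^ 2) * U t).
  set (dq t := (1 - a ^ 2) * (2 * dot n (fun k => c k t) (fun k => Derive (c k) t))).
  assert (Hq : forall t, 0 <= t <= 1 -> 0 < q t < 1).
  { intros t Ht. pose proof (sqnorm_ge0 n (fun k => c k t)).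
    pose proof (proj2 Hc t Ht). unfold q, U. split; nra. }
  assert (Hdq : forall t, 0 <= t <= 1 -> is_derive q t (dq t)).
  { intros t Ht. pose proof (curve_sqnorm_is_derive t Ht) as HU. unfold q, dq.
    auto_derive; [now exists (2 * dot n (fun k => c k t) (fun k => Derive (c k) t)) |].
    replace (Derive (fun x => U x) t) with (2 * dot n (fun k => c k t) (fun k => Derive (c k) t))
      by (symmetry; now apply is_derive_unique).
    ring. }
  replace (poincare_dist a) with (poincare_dist (sqrt (q 0)))
    by (unfold q, U; rewrite curve_sqnorm_0, Rmult_0_r, Rplus_0_r, sqrt_pow2; lra).
  replace (sqnorm n p) with (U 1) by apply curve_sqnorm_1.
  apply (increment_le_RInt (fun t => poincare_dist (sqrt (q t)))
           (fun t => dq t * / (sqrt (q t) * (1 - q t)))); [lra | | | |].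
  - intros t Ht. apply (is_derive_comp (fun x => poincare_dist (sqrt x)) q).
    + now apply poincare_dist_sqrt_is_derive, Hq.
    + now apply Hdq.
  - intros t Ht. apply (continuous_mult (K := R_AbsRing)).
    + apply (continuous_mult (K := R_AbsRing)); [apply continuous_const |].
      apply (continuous_mult (K := R_AbsRing)); [apply continuous_const |].
      apply dot_continuous. intros k Hk. now apply curve_continuous.
    + apply (continuous_comp q (fun x => / (sqrt x * (1 - x)))).
      * apply (ex_derive_continuous q). eexists. now apply Hdq.
      * specialize (Hq t Ht). apply (@ex_derive_continuous R_AbsRing R_NormedModule).
        auto_derive. repeat split; try lra. apply Rgt_not_eq, Rmult_lt_0_compat;
          [apply sqrt_lt_R0 |]; lra.
  - exact curve_speed_continuous.
  - intros t Ht. apply smoothed_rate_le_speed; [exact Ha | apply (proj2 Hc); lra].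
Qed.

Lemma gB_length_ge : poincare_dist (sqrt (sqnorm n p)) <= gB_length n c.
Proof.
  pose proof (sqnorm_ge0 n p) as HP0. pose proof sqnorm_endpoint_lt_1 as HP1.
  apply le_epsilon. intros d Hd.
  pose proof (tanh_half_bounds d) as Ha1. pose proof (tanh_half_pos d Hd) as Ha0.
  pose proof (gB_length_ge_smoothed (tanh (d / 2)) ltac:(lra)) as H.
  rewrite poincare_dist_tanh_half in H.
  set (a := tanh (d / 2)) in *.
  assert (0 <= a ^ 2 * (1 - sqnorm n p)) by (apply Rmult_le_pos; [apply pow2_ge_0 | lra]).
  assert (0 < (1 - a ^ 2) * (1 - sqnorm n p)) by (apply Rmult_lt_0_compat; nra).
  enough (poincare_dist (sqrt (sqnorm n p))
          <= poincare_dist (sqrt (a ^ 2 + (1 - a ^ 2) * sqnorm n p))) by lra.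
  apply poincare_dist_le.
  - pose proof (sqrt_pos (sqnorm n p)). split; [lra |]. apply sqrt_le_1_alt. lra.
  - apply sqrt_lt_one. lra.
Qed.

End AdmissibleCurve.

Definition radial_curve (p : nat -> R) : nat -> R -> R := fun k t => t * p k.

Lemma sqnorm_scale (n : nat) (s : R) (p : nat -> R) :
  sqnorm n (fun k => s * p k) = s ^ 2 * sqnorm n p.
Proof. unfold sqnorm. rewrite scal_sum. apply sum_eq. intros; ring. Qed.

Lemma omega_scale_self (n : nat) (s : R) (p : nat -> R) : omega n (fun k => s * p k) p = 0.
Proof.
  unfold omega. transitivity (sum_f_R0 (fun _ => 0) n);
    [apply sum_eq; intros; ring | rewrite sum_cte; ring].
Qed.

Lemma Derive_radial_curve (p : nat -> R) (k : nat) (t : R) :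
  Derive (radial_curve p k) t = p k.
Proof. apply is_derive_unique. unfold radial_curve. auto_derive; [exact I | ring]. Qed.

Lemma radial_curve_admissible (n : nat) (p : nat -> R) :
  sqnorm n p < 1 -> admissible_curve n (radial_curve p) p.
Proof.
  intros Hp. split.
  - intros k Hk. split; [| unfold radial_curve; split; ring].
    intros t Ht. split; [unfold radial_curve; auto_derive; exact I |].
    apply (continuous_ext (fun _ => p k)); [intros s; now rewrite Derive_radial_curve |].
    apply continuous_const.
  - intros t Ht. unfold radial_curve. rewrite sqnorm_scale.
    pose proof (sqnorm_ge0 n p). assert (t ^ 2 <= 1) by (simpl; nra). nra.
Qed.

Lemma gB_length_radial_curve (n : nat) (p : nat -> R) :
  sqnorm n p < 1 -> gB_length n (radial_curve p) = poincare_dist (sqrt (sqnorm n p)).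
Proof.
  intros Hp. pose proof (sqnorm_ge0 n p) as Hp0.
  set (a := sqrt (sqnorm n p)).
  assert (Ha : 0 <= a < 1) by (split; [apply sqrt_pos | now apply sqrt_lt_one]).
  assert (Ha2 : sqnorm n p = a ^ 2) by (unfold a; rewrite pow2_sqrt; lra).
  unfold gB_length.
  rewrite (RInt_ext _ (fun t => 2 * a / (1 - (t * a) ^ 2))).
  2:{ intros t Ht. rewrite Rmin_left, Rmax_right in Ht by lra.
      replace (fun k => Derive (radial_curve p k) t) with p
        by (apply functional_extensionality; intros k; now rewrite Derive_radial_curve).
      assert (0 < 1 - (t * a) ^ 2) by nra.
      unfold gB, radial_curve. rewrite sqnorm_scale, omega_scale_self, Ha2.
      rewrite <- (sqrt_pow2 (2 * a / (1 - (t * a) ^ 2))) by (apply Rdiv_le_0_compat; lra).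
      f_equal. field. lra. }
  assert (HI : is_RInt (fun t => 2 * a / (1 - (t * a) ^ 2)) 0 1
                 (poincare_dist (1 * a) - poincare_dist (0 * a))).
  { apply (is_RInt_derive (fun t => poincare_dist (t * a)));
      intros t Ht; rewrite Rmin_left, Rmax_right in Ht by lra;
      assert (Hta : 0 <= t * a < 1) by nra; unfold poincare_dist.
    - auto_derive.
      + repeat split; try lra. apply Rdiv_lt_0_compat; lra.
      + field. repeat split; nra.
    - apply (@ex_derive_continuous R_AbsRing R_NormedModule). auto_derive. nra. }
  rewrite (is_RInt_unique _ _ _ _ HI), Rmult_1_l, Rmult_0_l.
  unfold poincare_dist at 2. rewrite Rplus_0_r, Rminus_0_r, Rdiv_1_r, ln_1. ring.
Qed.

Theorem lemma4p1 (n : nat) (Rad : R) (hR : 0 < Rad) (p : nat -> R) :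
  geodesic_ball n Rad p <-> euclid_ball n (tanh (Rad / 2)) p.
Proof.
  pose proof (sqnorm_ge0 n p) as Hp0. pose proof (sqrt_pos (sqnorm n p)) as Hs0.
  unfold geodesic_ball, euclid_ball. split.
  - intros [Hp [c [Hc HL]]].
    apply poincare_dist_lt_iff; [split; [lra | now apply sqrt_lt_one] |].
    exact (Rle_lt_trans _ _ _ (gB_length_ge n c p Hc) HL).
  - intros Hs. pose proof (tanh_half_bounds Rad) as Ht.
    assert (Hp : sqnorm n p < 1)
      by (apply sqrt_lt_0_alt; rewrite sqrt_1; lra).
    split; [exact Hp |].
    exists (radial_curve p). split; [now apply radial_curve_admissible |].
    rewrite gB_length_radial_curve by exact Hp.
    apply poincare_dist_lt_iff; [lra | exact Hs].
Qed.
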